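(* Let $k$ be a domain, $R = k[X_0,\dots,X_m]/J$ a graded domain with $m\ge 1$, $X_0,\dots,X_m$ variables of positive integer weights $A_0,\dots,A_m$ and $J$ a homogeneous ideal, let $A=\operatorname{lcm}(A_0,\dots,A_m)$, $I=R_{\ge mA}$, and let $a_0,\dots,a_m$ be the positive integers with $a_iA_i=A$. Let $p\ge 2$ be an integer and assume $I^{p-1}=R_{\ge (p-1)mA}$. Let $c_0,\dots,c_m$ be nonnegative integers with $c_0A_0+\dots+c_mA_m\ge pmA$ (so the monomial $X_0^{c_0}\cdots X_m^{c_m}$ lies in $R_{\ge pmA}$). Fix $n$ with $1\le n\le m$ and suppose $a_i\le c_i$ for all $0\le i<n$; for each such $i$ let $k_i$ be the unique positive integer with $k_ia_i\le c_i<(k_i+1)a_i$. Then: (1) if $k_0+\dots+k_{n-1}\le m-1$, then $a_j\le c_j$ for some $j$ with $n\le j\le m$; (2) if $k_0+\dots+k_{n-1}\ge m$, then $X_0^{c_0}\cdots X_m^{c_m}\in I^p$.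
   Context: $R$ is $\mathbb N$-graded via $\deg X_i=A_i$, and $X_i$ also denotes its image in $R$. For a nonnegative integer $\alpha$, $R_{\ge\alpha}$ denotes the ideal of $R$ generated by all homogeneous elements of degree at least $\alpha$. *)

From HB Require Import structures.
From mathcomp Require Import all_boot all_order all_algebra.
From mathcomp Require Import mpoly.
Set Implicit Arguments. Unset Strict Implicit. Unset Printing Implicit Defensive.
Import GRing.Theory.
Local Open Scope ring_scope.

Definition wdeg (n : nat) (w : 'I_n -> nat) (mm : 'X_{1..n}) : nat :=
  (\sum_(i < n) w i * mm i)%N.

Definition wcomp (k : comRingType) (n : nat) (w : 'I_n -> nat) (d : nat)
  (P : {mpoly k[n]}) : {mpoly k[n]} :=
  \sum_(mm <- msupp P | wdeg w mm == d) P@_mm *: 'X_[mm].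

Definition whomog (k : comRingType) (n : nat) (w : 'I_n -> nat) (d : nat)
  (P : {mpoly k[n]}) : Prop :=
  forall mm, mm \in msupp P -> wdeg w mm = d.

Definition ideal_gen (R : comRingType) (S : R -> Prop) (x : R) : Prop :=
  exists (N : nat) (r s : 'I_N -> R), (forall i, S (s i)) /\ x = \sum_(i < N) r i * s i.

Definition ideal_pow (R : comRingType) (I : R -> Prop) (p : nat) : R -> Prop :=
  ideal_gen (fun x => exists f : 'I_p -> R, (forall i, I (f i)) /\ x = \prod_(i < p) f i).

(* R presented as k[X_0..X_{n-1}]/ker phi, graded by weights w:
   homogeneous elements of degree d are the images of weighted homogeneous
   polynomials of degree d;  R_{>= alpha} is the ideal they generate for d >= alpha *)
Definition Rge (k : comRingType) (n : nat) (w : 'I_n -> nat) (R : comRingType)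
  (phi : {mpoly k[n]} -> R) (alpha : nat) : R -> Prop :=
  ideal_gen (fun x => exists d P, (alpha <= d)%N /\ whomog w d P /\ x = phi P).

Definition lcm_weights (n : nat) (w : 'I_n -> nat) : nat := \big[lcmn/1%N]_(i < n) w i.

Definition monomial (k : comRingType) (n : nat) (c : 'I_n -> nat) : {mpoly k[n]} :=
  \prod_(i < n) 'X_i ^+ c i.

(* Write L for the lcm of the weights and a_i = L / A_i, so that a_i A_i = L.
   Since c_i < (c_i / a_i + 1) a_i, the weighted degree of X^c is below
   (sum_i (c_i / a_i + 1)) L.  In case (1), if c_j < a_j for all j >= n, this
   bound is at most (m - 1 + m + 1) L = 2 m L <= p m L, contradicting
   deg X^c >= p m L.  In case (2), choose t_i <= c_i / a_i with sum t_i = m;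
   the exponents e_i = t_i a_i <= c_i give a monomial X^e of degree exactly
   m L, i.e. in I, while X^(c - e) has degree >= (p - 1) m L, so it lies in
   R_{>= (p-1) m L} = I^(p-1).  Hence X^c = X^e X^(c-e) lies in I^p. *)

From HB Require Import structures.
From mathcomp Require Import all_boot all_order all_algebra.
From mathcomp Require Import mpoly.
From mathcomp Require Import zify.
From Stdlib Require Import ClassicalEpsilon.
Set Implicit Arguments.
Unset Strict Implicit.
Unset Printing Implicit Defensive.
Import GRing.Theory.
Local Open Scope ring_scope.

Lemma exists_le_sum_eq N (f : 'I_N -> nat) s : (s <= \sum_(i < N) f i)%N ->
  exists t : 'I_N -> nat, (forall i, t i <= f i)%N /\ (\sum_(i < N) t i)%N = s.
Proof.
elim: N f s => [|N IH] f s.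
  rewrite big_ord0 leqn0 => /eqP ->.
  by exists (fun _ => 0%N); rewrite big_ord0.
rewrite big_ord_recl => hs.
have [t' [le_t'f sum_t']] :=
  IH (fun i => f (lift ord0 i)) (s - minn s (f ord0))%N ltac:(lia).
exists (fun i => if unlift ord0 i is Some j then t' j else minn s (f ord0)).
split=> [i|]; first by case: unliftP => [j ->|->] //; exact: geq_minr.
rewrite big_ord_recl unlift_none; under eq_bigr do rewrite liftK.
by rewrite sum_t'; lia.
Qed.

Lemma leq_sum_cond (I : Type) (r : seq I) (P : pred I) (F : I -> nat) :
  (\sum_(i <- r | P i) F i <= \sum_(i <- r) F i)%N.
Proof. by rewrite big_mkcond leq_sum // => i _; case: ifP. Qed.

Lemma sum_mulnBr N (w c e : 'I_N -> nat) : (forall i, e i <= c i)%N ->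
  (\sum_(i < N) w i * (c i - e i)
   = \sum_(i < N) w i * c i - \sum_(i < N) w i * e i)%N.
Proof.
move=> le_ec.
have sumD : (\sum_(i < N) w i * (c i - e i) + \sum_(i < N) w i * e i
            = \sum_(i < N) w i * c i)%N.
  by rewrite -big_split; apply: eq_bigr => i _ /=; rewrite -mulnDr subnK.
by rewrite -sumD addnK.
Qed.

Section LcmWeights.

Variables (N : nat) (A : 'I_N -> nat).
Hypothesis A_gt0 : forall i, (0 < A i)%N.

Local Notation L := (lcm_weights A).

Lemma lcm_weights_dvd i : (A i %| L)%N.
Proof. exact: (biglcmn_sup i). Qed.

Lemma lcm_weights_gt0 : (0 < L)%N.
Proof.
by rewrite /lcm_weights; elim/big_ind: _ => // x y; rewrite lcmn_gt0 => ->.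
Qed.

Lemma divn_lcm_weightsK i : (L %/ A i * A i = L)%N.
Proof. by rewrite divnK // lcm_weights_dvd. Qed.

Lemma divn_lcm_weights_gt0 i : (0 < L %/ A i)%N.
Proof. by rewrite divn_gt0 // dvdn_leq ?lcm_weights_gt0 ?lcm_weights_dvd. Qed.

Lemma weighted_sum_lt (c : 'I_N -> nat) :
  (\sum_(i < N) c i * A i + N <= (\sum_(i < N) c i %/ (L %/ A i) + N) * L)%N.
Proof.
rewrite -[X in (_ + X <= _)%N]card_ord -sum1_card -big_split /=.
rewrite -[X in (_ + X)%N]card_ord -sum1_card -big_split big_distrl /=.
apply: leq_sum => i _; rewrite !addn1 -{2}(divn_lcm_weightsK i) mulnA.
by rewrite ltn_mul2r A_gt0 ltn_ceil ?divn_lcm_weights_gt0.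
Qed.

Lemma weighted_sum_lt_cond (P : pred 'I_N) (c : 'I_N -> nat) :
  (forall i, ~~ P i -> c i < L %/ A i)%N ->
  (\sum_(i < N) c i * A i + N <= (\sum_(i < N | P i) c i %/ (L %/ A i) + N) * L)%N.
Proof.
move=> small; suff -> : (\sum_(i < N | P i) c i %/ (L %/ A i)
                        = \sum_(i < N) c i %/ (L %/ A i))%N by exact: weighted_sum_lt.
by rewrite big_mkcond; apply: eq_bigr => i _; case: ifPn => // /small /divn_small.
Qed.

Lemma exists_exponent_of_weight (c : 'I_N -> nat) s :
  (s <= \sum_(i < N) c i %/ (L %/ A i))%N ->
  exists e : 'I_N -> nat,
    (forall i, e i <= c i)%N /\ (\sum_(i < N) A i * e i = s * L)%N.
Proof.
move=> /exists_le_sum_eq [t [le_t sum_t]].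
exists (fun i => t i * (L %/ A i))%N; split=> [i|].
  by rewrite -leq_divRL ?le_t ?divn_lcm_weights_gt0.
rewrite -sum_t big_distrl /=; apply: eq_bigr => i _.
by rewrite mulnC -mulnA divn_lcm_weightsK.
Qed.

End LcmWeights.

Lemma ideal_gen_sub (R : comNzRingType) (S : R -> Prop) x : S x -> ideal_gen S x.
Proof. by move=> Sx; exists 1%N, (fun _ => 1), (fun _ => x); rewrite big_ord1 mul1r. Qed.

Lemma ideal_pow_mull (R : comNzRingType) (I : R -> Prop) q x y :
  I y -> ideal_pow I q x -> ideal_pow I q.+1 (y * x).
Proof.
move=> Iy [N [r [s [hs ->]]]].
pose F i := proj1_sig (constructive_indefinite_description _ (hs i)).
have [IF sE] : (forall i j, I (F i j)) /\ (forall i, s i = \prod_(j < q) F i j).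
  by split=> i; have [] := proj2_sig (constructive_indefinite_description _ (hs i)).
exists N, r, (fun i => y * s i); split=> [i|].
  exists (fun j => if unlift ord0 j is Some j' then F i j' else y); split.
    by move=> j; case: unliftP => [j' _|_].
  by rewrite big_ord_recl unlift_none; under eq_bigr do rewrite liftK; rewrite sE.
by rewrite mulr_sumr; apply: eq_bigr => i _; rewrite mulrCA.
Qed.

Section Monomials.

Variables (k : comNzRingType) (n : nat).

Lemma monomialE (c : 'I_n -> nat) : monomial k c = 'X_[[multinom c i | i < n]].
Proof. by rewrite mpolyXE_id /monomial; apply: eq_bigr => i _; rewrite mnmE. Qed.

Lemma monomial_subnK (c e : 'I_n -> nat) : (forall i, e i <= c i)%N ->
  monomial k c = monomial k e * monomial k (fun i => c i - e i)%N.
Proof.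
by move=> le_ec; rewrite /monomial -big_split; apply: eq_bigr => i _ /=; rewrite -exprD subnKC.
Qed.

Lemma monomial_whomog (w c : 'I_n -> nat) :
  whomog w (\sum_(i < n) w i * c i)%N (monomial k c).
Proof.
move=> mm; rewrite monomialE msuppX inE => /eqP ->.
by apply: eq_bigr => i _; rewrite mnmE.
Qed.

Lemma Rge_monomial (w : 'I_n -> nat) (R : comNzRingType)
    (phi : {mpoly k[n]} -> R) alpha (c : 'I_n -> nat) :
  (alpha <= \sum_(i < n) w i * c i)%N -> Rge w phi alpha (phi (monomial k c)).
Proof.
move=> le_alpha; apply: ideal_gen_sub.
by exists (\sum_(i < n) w i * c i)%N, (monomial k c); do ?split=> //;
  exact: monomial_whomog.
Qed.

End Monomials.

Theorem mainTheorem3 (k : idomainType) (m : nat) (A : 'I_m.+1 -> nat)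
  (R : idomainType) (phi : {rmorphism {mpoly k[m.+1]} -> R})
  (p n : nat) (c : 'I_m.+1 -> nat) :
  (1 <= m)%N ->
  (forall i, 0 < A i)%N ->
  (* R = k[X_0..X_m]/J with J = ker phi *)
  (forall y : R, exists P, phi P = y) ->
  (* J is homogeneous *)
  (forall P, phi P = 0 -> forall d, phi (wcomp A d P) = 0) ->
  (2 <= p)%N ->
  (forall x, ideal_pow (Rge A phi (m * lcm_weights A)) p.-1 x
             <-> Rge A phi (p.-1 * m * lcm_weights A) x) ->
  (p * m * lcm_weights A <= \sum_(i < m.+1) c i * A i)%N ->
  (1 <= n <= m)%N ->
  (forall i : 'I_m.+1, (i < n)%N -> lcm_weights A %/ A i <= c i)%N ->
  ((\sum_(i < m.+1 | (i < n)%N) c i %/ (lcm_weights A %/ A i) <= m.-1)%N ->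
     exists j : 'I_m.+1, (n <= j)%N /\ (lcm_weights A %/ A j <= c j)%N)
  /\
  ((m <= \sum_(i < m.+1 | (i < n)%N) c i %/ (lcm_weights A %/ A i))%N ->
     ideal_pow (Rge A phi (m * lcm_weights A)) p (phi (monomial k c))).
Proof.
move=> m_gt0 A_gt0 _ _ + + deg_c _ _; case: p deg_c => // q deg_c p_ge2 /= IpE.
set L := lcm_weights A in IpE deg_c *; split=> [le_sum|ge_sum].
  case: (pickP (fun j : 'I_m.+1 => (n <= j) && (L %/ A j <= c j))%N).
    by move=> j /andP[]; exists j.
  move=> small; exfalso.
  have c_small (i : 'I_m.+1) : ~~ (i < n)%N -> (c i < L %/ A i)%N.
    by rewrite -leqNgt ltnNge => le_ni; apply/negbT; have := small i; rewrite /= le_ni.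
  have := weighted_sum_lt_cond A_gt0 c_small; rewrite -/L.
  have : ((\sum_(i < m.+1 | (i < n)%N) c i %/ (L %/ A i) + m.+1) * L
          <= (m.-1 + m.+1) * L)%N by rewrite leq_mul2r leq_add2r le_sum orbT.
  have : ((m.-1 + m.+1) * L <= 2 * m * L)%N by rewrite leq_mul2r; apply/orP; right; lia.
  have : (2 * m * L <= q.+1 * m * L)%N by rewrite !leq_mul2r p_ge2 !orbT.
  lia.
have [e [le_ec deg_e]] :=
  exists_exponent_of_weight A_gt0 (leq_trans ge_sum (leq_sum_cond _ _ _)).
rewrite (monomial_subnK k le_ec) rmorphM.
apply: ideal_pow_mull; first by apply: Rge_monomial; rewrite deg_e.
apply/IpE/Rge_monomial; rewrite sum_mulnBr // deg_e -/L.
move: deg_c; rewrite (eq_bigr _ (fun i _ => mulnC (c i) (A i))) mulSn mulnDl => deg_c.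
by rewrite leq_subRL // (leq_trans (leq_addr _ _) deg_c).
Qed.
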